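(* For $n\ge2$, the natural homomorphism from the abstract commensurator $\operatorname{Com}(\mathcal{H}_n)$ to the quasi-isometry group $\operatorname{QI}(\mathcal{H}_n)$ is injective.
   Context: Let $\mathbb{N}=\{1,2,3,\dots\}$, $\mathbb{Z}_n$ the integers modulo $n$, $R_n=\mathbb{Z}_n\times\mathbb{N}$. The Houghton group $\mathcal{H}_n$ is the group of permutations $\sigma$ of $R_n$ for which there exist $N\ge0$ and integers $t_i$ with $(i,k)\sigma=(i,k+t_i)$ for all $i\in\mathbb{Z}_n$, $k\ge N$ (right actions); it is finitely generated for $n\ge2$ and is given a word metric. A commensuration of a group $G$ is an isomorphism $\phi:A\to B$ between finite-index subgroups of $G$; two are equivalent if they agree on a finite-index subgroup; $\operatorname{Com}(G)$ is the group of equivalence classes. $\operatorname{QI}(G)$ is the group of quasi-isometries $G\to G$ modulo those at bounded distance from each other. A commensuration $\phi:A\to B$ is a quasi-isometry of $G$ (since $A,B$ are quasi-isometric to $G$ via inclusion), giving the natural homomorphism $\operatorname{Com}(G)\to\operatorname{QI}(G)$. *)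

From mathcomp Require Import all_boot all_algebra.
From Stdlib Require Import ClassicalEpsilon.
Set Implicit Arguments. Unset Strict Implicit. Unset Printing Implicit Defensive.
Import GRing.Theory Num.Theory.

(* R_n = Z_n x N.  Z_n is represented by 'I_n (n >= 2 in the theorem), and
   the positive integer k+1 of N = {1,2,...} is encoded by the nat k. *)
Definition Rn (n : nat) : Type := ('I_n * nat)%type.

Definition perm_fun (n : nat) : Type := Rn n -> Rn n.

Definition houghton (n : nat) (s : perm_fun n) : Prop :=
  bijective s /\
  exists (N : nat) (t : 'I_n -> int),
    forall (i : 'I_n) (k : nat), (N <= k)%N ->
      (s (i, k)).1 = i /\ (((s (i, k)).2)%:Z = k%:Z + t i)%R.

(* Group structure with right actions: x(st) = (xs)t, so st = t o s. *)
Definition hmul (n : nat) (s t : perm_fun n) : perm_fun n := fun x => t (s x).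
Definition hone (n : nat) : perm_fun n := fun x => x.
Definition hinv (n : nat) (s : perm_fun n) : perm_fun n :=
  fun y => epsilon (inhabits y) (fun x => s x = y).

Definition subgroup (n : nat) (A : perm_fun n -> Prop) : Prop :=
  (forall g, A g -> houghton g) /\ A (@hone n) /\
  (forall g h, A g -> A h -> A (hmul g h)) /\
  (forall g, A g -> A (hinv g)).

Definition finite_index (n : nat) (A : perm_fun n -> Prop) : Prop :=
  subgroup A /\
  exists reps : seq (perm_fun n),
    (forall g, List.In g reps -> houghton g) /\
    forall h, houghton h -> exists g a, List.In g reps /\ A a /\ h = hmul g a.

Definition commensuration (n : nat) (A B : perm_fun n -> Prop)
    (phi : perm_fun n -> perm_fun n) : Prop :=
  finite_index A /\ finite_index B /\
  (forall a, A a -> B (phi a)) /\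
  (forall a b, A a -> A b -> phi (hmul a b) = hmul (phi a) (phi b)) /\
  (forall a b, A a -> A b -> phi a = phi b -> a = b) /\
  (forall b, B b -> exists a, A a /\ phi a = b).

Definition letter (n m : nat) (gen : 'I_m -> perm_fun n) (l : bool * 'I_m)
  : perm_fun n := if l.1 then hinv (gen l.2) else gen l.2.

Definition word_eval (n m : nat) (gen : 'I_m -> perm_fun n)
    (w : seq (bool * 'I_m)) : perm_fun n :=
  foldr (fun l acc => hmul (letter gen l) acc) (@hone n) w.

Definition generating_family (n m : nat) (gen : 'I_m -> perm_fun n) : Prop :=
  (forall j, houghton (gen j)) /\
  (forall g, houghton g -> exists w, word_eval gen w = g).

Definition word_dist_le (n m : nat) (gen : 'I_m -> perm_fun n)
    (g h : perm_fun n) (C : nat) : Prop :=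
  exists w, (size w <= C)%N /\ word_eval gen w = hmul (hinv g) h.

(* If [phi g x <> psi g x] for some [g] in [A /\ A'], take a cycle through
   [phi g x] of length larger than the product of the indices of [B] and [A'],
   running far up the ray of [phi g x] and avoiding [psi g x].  Some power of
   it lies in [B], hence is [phi a], and some power [h] of [a] lies in [A'].
   Then [phi h] drags [phi g x] arbitrarily high while fixing [psi g x].  But
   [phi] and [psi] differ by words of bounded length, i.e. by permutations of
   bounded displacement, on [g], [h] and [g h]; so [phi h] can only move
   [phi g x] a bounded distance above [psi g x], a contradiction. *)

From mathcomp Require Import all_boot all_algebra zify.
From Stdlib Require Import ClassicalEpsilon Classical FunctionalExtensionality.
From Stdlib Require List.
Set Implicit Arguments. Unset Strict Implicit. Unset Printing Implicit Defensive.

Section Inverse.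
Variables (n : nat) (s : perm_fun n).
Hypothesis s_bij : bijective s.

Lemma hinvK : cancel (hinv s) s.
Proof.
case: s_bij => g _ sK y.
exact: (epsilon_spec (inhabits y) (fun x => s x = y) (ex_intro _ (g y) (sK y))).
Qed.

Lemma hinvKl : cancel s (hinv s).
Proof. by move=> x; apply: (bij_inj s_bij); rewrite hinvK. Qed.

End Inverse.

Lemma subgroup_bij n (S : perm_fun n -> Prop) g : subgroup S -> S g -> bijective g.
Proof. by case=> hS _ /hS []. Qed.

Definition displacement_le n (s : perm_fun n) (B : nat) : Prop :=
  forall x : Rn n, ((s x).2 <= x.2 + B)%N /\ (x.2 <= (s x).2 + B)%N.

Lemma displacement_le_trans n (s : perm_fun n) B B' :
  (B <= B')%N -> displacement_le s B -> displacement_le s B'.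
Proof. by move=> le_BB' sB x; have := sB x; lia. Qed.

Lemma displacement_le_hmul n (s t : perm_fun n) B B' :
  displacement_le s B -> displacement_le t B' -> displacement_le (hmul s t) (B + B').
Proof. by move=> sB tB' x; have := sB x; have := tB' (s x); rewrite /hmul; lia. Qed.

Lemma displacement_le_hinv n (s : perm_fun n) B :
  bijective s -> displacement_le s B -> displacement_le (hinv s) B.
Proof. by move=> s_bij sB y; have := sB (hinv s y); rewrite hinvK //; lia. Qed.

(* Below level [N] there are finitely many points; above it [s] translates
   each ray by [t i]. *)
Lemma houghton_displacement n (s : perm_fun n) :
  houghton s -> exists B, displacement_le s B.
Proof.
move=> [_ [N [t s_eventually]]].
pose low := \max_(i : 'I_n) \max_(k < N) (s (i, val k)).2.
pose T := \max_(i : 'I_n) `|t i|%N.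
exists (low + N + T) => -[i k] /=.
have tT : (`|t i| <= T)%N by apply: leq_bigmax.
have [le_Nk|lt_kN] := leqP N k.
  by have [_] := s_eventually i k le_Nk; lia.
suff : ((s (i, k)).2 <= low)%N by lia.
apply: leq_trans (leq_bigmax i).
exact: (leq_bigmax (Ordinal lt_kN)).
Qed.

Lemma word_eval_displacement n m (gen : 'I_m -> perm_fun n) :
  (forall j, houghton (gen j)) ->
  exists B, forall w, displacement_le (word_eval gen w) (size w * B).
Proof.
move=> gen_houghton.
have /fin_all_exists [Bgen genB] : forall j, exists B, displacement_le (gen j) B.
  by move=> j; exact: houghton_displacement.
exists (\sum_j Bgen j); elim=> [|l w IHw] /=.
  by move=> x; rewrite /hone; lia.
have letterB : displacement_le (letter gen l) (\sum_j Bgen j).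
  have le_sum : (Bgen l.2 <= \sum_j Bgen j)%N by rewrite (bigD1 l.2) //=; lia.
  have genB' := displacement_le_trans le_sum (genB l.2).
  rewrite /letter; case: ifP => // _.
  by apply: displacement_le_hinv => //; case: (gen_houghton l.2).
by rewrite mulSn; exact: displacement_le_hmul letterB IHw.
Qed.

Lemma word_dist_displacement n m (gen : 'I_m -> perm_fun n) C :
  (forall j, houghton (gen j)) ->
  exists E, forall s t, bijective s -> word_dist_le gen s t C ->
    exists W, displacement_le W E /\ forall z, W (s z) = t z.
Proof.
move=> /word_eval_displacement [B wordB].
exists (C * B) => s t s_bij [w [size_w ew]].
exists (word_eval gen w); split.
  by apply: displacement_le_trans (wordB w); rewrite leq_mul2r size_w orbT.
by move=> z; rewrite ew /hmul hinvKl.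
Qed.

Definition hpow n (x : perm_fun n) (k : nat) : perm_fun n := fun y => iter k x y.

Lemma hpowD n (x : perm_fun n) i j : hpow x (i + j) = hmul (hpow x i) (hpow x j).
Proof. by apply: functional_extensionality => y; rewrite /hmul /hpow addnC iterD. Qed.

Lemma subgroup_hpow n (S : perm_fun n -> Prop) a j : subgroup S -> S a -> S (hpow a j).
Proof.
case=> _ [S1 [SM _]] Sa; elim: j => [|j IHj]; first exact: S1.
exact: SM IHj Sa.
Qed.

Lemma hpow_morph n (S : perm_fun n -> Prop) (phi : perm_fun n -> perm_fun n) a j :
  subgroup S -> S a -> (forall a b, S a -> S b -> phi (hmul a b) = hmul (phi a) (phi b)) ->
  phi (hpow a j.+1) = hpow (phi a) j.+1.
Proof.
move=> sS Sa phiM; elim: j => // j IHj.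
by rewrite -addn1 !hpowD phiM ?IHj //; exact: subgroup_hpow.
Qed.

Lemma pigeonhole_list T (G : nat -> T) (l : list T) :
  (forall j, List.In (G j) l) -> exists i j, (i < j <= length l)%N /\ G i = G j.
Proof.
move=> Gl; apply: NNPP => noG.
have G_nodup : List.NoDup (List.map G (List.seq 0 (length l).+1)).
  apply: List.NoDup_map_NoDup_ForallPairs; last exact: List.seq_NoDup.
  move=> i j /List.in_seq li /List.in_seq lj eGij; apply: NNPP => ne_ij.
  by case: (ltngtP i j) => [lt_ij|lt_ji|//]; apply: noG;
    [exists i, j | exists j, i]; split => //; lia.
have G_incl : List.incl (List.map G (List.seq 0 (length l).+1)) l.
  by move=> y /List.in_map_iff [j [<- _]].
have := List.NoDup_incl_length G_nodup G_incl.
by rewrite List.length_map List.length_seq; lia.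
Qed.

(* By pigeonhole, two of the powers [x^0, ..., x^k] lie in the same coset
   of [S], with [k] the number of cosets. *)
Lemma finite_index_hpow n (S : perm_fun n -> Prop) : finite_index S ->
  exists k, forall x, (forall j, houghton (hpow x j)) ->
    exists d, (0 < d <= k)%N /\ S (hpow x d).
Proof.
move=> [sS [reps [reps_houghton reps_cover]]].
exists (length reps) => x x_houghton.
have /choice [G HG] : forall j, exists r,
    List.In r reps /\ exists a, S a /\ hpow x j = hmul r a.
  move=> j; have [r [a [r_in [Sa ->]]]] := reps_cover _ (x_houghton j).
  by exists r; split => //; exists a.
have [i [j [lt_ij eGij]]] := pigeonhole_list (fun j => (HG j).1).
have [[r_in [ai [Sai xi]]] [_ [aj [Saj xj]]]] := (HG i, HG j).
rewrite -eGij in xj.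
have [r' _ rK] := (reps_houghton _ r_in).1.
have ai_bij := subgroup_bij sS Sai.
exists (j - i); split; first lia.
suff -> : hpow x (j - i) = hmul (hinv ai) aj.
  by case: sS => _ [_ [SM Sinv]]; apply: SM => //; exact: Sinv.
apply: functional_extensionality => y; rewrite /hmul.
have {1}-> : y = ai (G i (r' (hinv ai y))) by rewrite rK hinvK.
have := congr1 (fun f => f (r' (hinv ai y))) xi; rewrite /hmul => <-.
have xji : hpow x j = hmul (hpow x i) (hpow x (j - i)).
  by rewrite -hpowD subnKC // ltnW //; case/andP: lt_ij.
by have := congr1 (fun f => f (r' (hinv ai y))) xj; rewrite xji /hmul rK.
Qed.

Lemma houghton_hone n : houghton (@hone n).
Proof.
split; first by exists (@hone n).
by exists 0%N, (fun _ => 0%R) => i k _; rewrite /hone /= GRing.addr0.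
Qed.

Lemma subgroup_inter n (A A' : perm_fun n -> Prop) :
  subgroup A -> subgroup A' -> subgroup (fun g => A g /\ A' g).
Proof.
move=> [A_h [A1 [AM Ainv]]] [_ [A'1 [A'M A'inv]]].
split; first by move=> g [/A_h].
split=> //; split; first by move=> g h [? ?] [? ?]; split; [apply: AM | apply: A'M].
by move=> g [? ?]; split; [apply: Ainv | apply: A'inv].
Qed.

(* A representative of A /\ A' is chosen in each nonempty intersection of a
   coset of A with a coset of A'. *)
Lemma finite_index_inter n (A A' : perm_fun n -> Prop) :
  finite_index A -> finite_index A' -> finite_index (fun g => A g /\ A' g).
Proof.
move=> [sA [rA [_ rA_cover]]] [sA' [rA' [_ rA'_cover]]].
split; first exact: subgroup_inter.
pose Q g1 g2 r := exists a a', A a /\ A' a' /\ r = hmul g1 a /\ r = hmul g2 a'.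
have /choice [rep repP] : forall p : perm_fun n * perm_fun n, exists r,
    houghton r /\ ((exists r', houghton r' /\ Q p.1 p.2 r') -> Q p.1 p.2 r).
  move=> [g1 g2]; case: (classic (exists r', houghton r' /\ Q g1 g2 r')).
    by move=> [r' [r'_h Qr']]; exists r'; split.
  by move=> noQ; exists (@hone n); split; [exact: houghton_hone | move/noQ].
exists (List.flat_map (fun g1 => List.map (fun g2 => rep (g1, g2)) rA') rA); split.
  by move=> r /List.in_flat_map [g1 [_ /List.in_map_iff [g2 [<- _]]]]; case: (repP (g1, g2)).
move=> h h_h.
have [g1 [a [g1_in [Aa eh1]]]] := rA_cover h h_h.
have [g2 [a' [g2_in [A'a' eh2]]]] := rA'_cover h h_h.
have [[[r' _ repK] _] Qrep] := repP (g1, g2).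
have [a0 [a0' [Aa0 [A'a0' [er1 er2]]]]] : Q g1 g2 (rep (g1, g2)).
  by apply: Qrep; exists h; split => //; exists a, a'.
have a0_bij := subgroup_bij sA Aa0; have a0'_bij := subgroup_bij sA' A'a0'.
have same_quotient : hmul (hinv a0) a = hmul (hinv a0') a'.
  apply: functional_extensionality => y; rewrite /hmul -(repK y).
  have rep1 w : rep (g1, g2) w = a0 (g1 w) by rewrite er1.
  have rep2 w : rep (g1, g2) w = a0' (g2 w) by rewrite er2.
  have h1 w : h w = a (g1 w) by rewrite eh1.
  have h2 w : h w = a' (g2 w) by rewrite eh2.
  by rewrite {1}rep1 rep2 !hinvKl // -h1 -h2.
exists (rep (g1, g2)), (hmul (hinv a0) a); split.
  by apply/List.in_flat_map; exists g1; split => //; apply/List.in_map_iff; exists g2.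
split; last first.
  by apply: functional_extensionality => z; rewrite /hmul er1 /hmul hinvKl // eh1.
case: sA sA' => _ [_ [AM Ainv]] [_ [_ [A'M A'inv]]].
split; first by apply: AM => //; apply: Ainv.
by rewrite same_quotient; apply: A'M => //; apply: A'inv.
Qed.

Lemma iter_bij T (f : T -> T) k : bijective f -> bijective (iter k f).
Proof. by move=> f_bij; elim: k => [|k IHk]; [exists id | exact: bij_comp f_bij IHk]. Qed.

Lemma next_bij (T : eqType) (p : seq T) : uniq p -> bijective (next p).
Proof. by move=> p_uniq; exists (prev p); [exact: prev_next | exact: next_prev]. Qed.

Lemma iter_next_head (T : eqType) (y : T) q k : uniq (y :: q) ->
  (k < size (y :: q))%N -> iter k (next (y :: q)) y = nth y (y :: q) k.
Proof.
move=> p_uniq; elim: k => // k IHk lt_k.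
by rewrite iterS IHk 1?ltnW // next_nth mem_nth 1?ltnW // index_uniq 1?ltnW.
Qed.

Lemma iter_next_notin (T : eqType) (p : seq T) x k : x \notin p -> iter k (next p) x = x.
Proof. by move=> x_notin; elim: k => //= k ->; rewrite next_nth (negbTE x_notin). Qed.

Lemma houghton_eventually_id n (s : perm_fun n) N :
  bijective s -> (forall x, (N <= x.2)%N -> s x = x) -> houghton s.
Proof.
move=> s_bij s_id; split=> //; exists N, (fun _ => 0%R) => i k le_Nk.
by rewrite s_id //= GRing.addr0.
Qed.

(* Read by [next] as the cycle [x0 -> (x0.1, H + 1) -> ... -> (x0.1, H + R) -> x0]. *)
Definition ray_cycle n (x0 : Rn n) (H R : nat) : seq (Rn n) :=
  x0 :: [seq (x0.1, H + j) | j <- iota 1 R].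

Section RayCycle.
Variables (n : nat) (x0 : Rn n) (H R : nat).

Lemma mem_ray_cycle (y : Rn n) : y \in ray_cycle x0 H R -> y = x0 \/ (H < y.2 <= H + R)%N.
Proof.
rewrite inE => /orP [/eqP ->|/mapP [j]]; first by left.
by rewrite mem_iota => j_range ->; right; rewrite /=; lia.
Qed.

Hypothesis x0_low : (x0.2 <= H)%N.

Lemma uniq_ray_cycle : uniq (ray_cycle x0 H R).
Proof.
rewrite /= map_inj_uniq ?iota_uniq ?andbT; last by move=> i j [/addnI].
by apply/mapP => -[j]; rewrite mem_iota => j_range x0E; move: x0_low; rewrite x0E /=; lia.
Qed.

Lemma iter_ray_cycle_head k : (0 < k <= R)%N ->
  iter k (next (ray_cycle x0 H R)) x0 = (x0.1, H + k).
Proof.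
move=> k_range; rewrite iter_next_head ?uniq_ray_cycle //=; last first.
  by rewrite size_map size_iota; lia.
case: k k_range => // k k_range.
by rewrite /= (nth_map 0) ?size_iota ?nth_iota ?add1n //; lia.
Qed.

Lemma houghton_ray_cycle_pow j : houghton (hpow (next (ray_cycle x0 H R)) j).
Proof.
apply: (@houghton_eventually_id _ _ (H + R).+1).
  exact/iter_bij/next_bij/uniq_ray_cycle.
move=> y y_high; apply: iter_next_notin; apply/negP => /mem_ray_cycle [y_x0|]; last lia.
by move: x0_low; rewrite -y_x0; lia.
Qed.

End RayCycle.

Section Rigidity.
Variables (n : nat) (A B A' : perm_fun n -> Prop) (phi psi : perm_fun n -> perm_fun n).
Variable E : nat.
Hypothesis phi_comm : commensuration A B phi.
Hypothesis A'_fi : finite_index A'.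
Hypothesis psiM : forall a b, A' a -> A' b -> psi (hmul a b) = hmul (psi a) (psi b).
Hypothesis phi_psi_close : forall g, A g -> A' g ->
  exists W, displacement_le W E /\ forall z, W (phi g z) = psi g z.

(* Compare [phi (g h)] and [psi (g h)] at [x]: they differ by a permutation of
   displacement at most [E], and so do [phi h] and [psi h]. *)
Lemma phi_fix_level_bound g h x : A g -> A' g -> A h -> A' h ->
  phi h (psi g x) = psi g x -> ((phi h (phi g x)).2 <= (psi g x).2 + E + E)%N.
Proof.
move=> Ag A'g Ah A'h phih_fix.
case: phi_comm => -[sA _] [_ [_ [phiM _]]].
case: A'_fi => -[_ [_ [A'M _]]] _.
have [W1 [W1E eW1]] := phi_psi_close (sA.2.2.1 _ _ Ag Ah) (A'M _ _ A'g A'h).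
have [W2 [W2E eW2]] := phi_psi_close Ah A'h.
have psi_gh : psi (hmul g h) x = W2 (psi g x).
  by rewrite psiM // /hmul -eW2 phih_fix.
have := eW1 x; rewrite phiM // psi_gh /hmul => eW.
by have := W1E (phi h (phi g x)); have := W2E (psi g x); rewrite eW; lia.
Qed.

(* The cycle is longer than [kB * kA'], so its power [e * d] does not wrap
   around and carries [phi g x] to level [H + e * d]. *)
Lemma phi_eq_psi g : A g -> A' g -> phi g = psi g.
Proof.
move=> Ag A'g; apply: functional_extensionality => x; apply: NNPP => phi_neq_psi.
case: (phi_comm) => -[sA _] [B_fi [_ [phiM [_ phi_onto]]]].
have [kB Bpow] := finite_index_hpow B_fi.
have [kA' A'pow] := finite_index_hpow A'_fi.
set x0 := phi g x; set y0 := psi g x.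
pose H := x0.2 + y0.2 + E + E.
have x0_low : (x0.2 <= H)%N by rewrite /H; lia.
pose t := next (ray_cycle x0 H (kB * kA')).
have [d [d_range Btd]] := Bpow t (houghton_ray_cycle_pow (kB * kA') x0_low).
have [a [Aa phia]] := phi_onto _ Btd.
have [e [e_range A'ae]] := A'pow a (fun j => sA.1 _ (subgroup_hpow j sA Aa)).
have Aae := subgroup_hpow e sA Aa.
have phi_ae z : phi (hpow a e) z = iter (e * d) t z.
  case: e e_range {A'ae Aae} => // e _.
  by rewrite (hpow_morph e sA Aa phiM) phia /hpow iterM.
have ae_x0 : phi (hpow a e) x0 = (x0.1, H + e * d).
  by rewrite phi_ae iter_ray_cycle_head //; nia.
have ae_y0 : phi (hpow a e) y0 = y0.
  rewrite phi_ae iter_next_notin //.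
  apply/negP => /mem_ray_cycle [y0_x0|]; first exact/phi_neq_psi/esym.
  by rewrite /H; lia.
have := phi_fix_level_bound Ag A'g Aae A'ae ae_y0.
by rewrite -/x0 -/y0 ae_x0 /= /H; nia.
Qed.

End Rigidity.

Theorem mainTheorem9 (n : nat) (hn : (2 <= n)%N)
    (m : nat) (gen : 'I_m -> perm_fun n) (hgen : generating_family gen)
    (A B A' B' : perm_fun n -> Prop) (phi psi : perm_fun n -> perm_fun n) :
  commensuration A B phi -> commensuration A' B' psi ->
  (exists C : nat, forall g, A g -> A' g -> word_dist_le gen (phi g) (psi g) C) ->
  exists D : perm_fun n -> Prop,
    finite_index D /\ (forall g, D g -> A g /\ A' g) /\
    (forall g, D g -> phi g = psi g).
Proof.
move=> phi_comm psi_comm [C close].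
have [E closeE] := word_dist_displacement C hgen.1.
exists (fun g => A g /\ A' g); split; first exact: finite_index_inter phi_comm.1 psi_comm.1.
split=> // g [Ag A'g].
case: (phi_comm) (psi_comm) => _ [[sB _] [phiAB _]] [A'_fi [_ [_ [psiM _]]]].
apply: phi_eq_psi phi_comm A'_fi psiM _ g Ag A'g => g' Ag' A'g'.
exact: closeE (subgroup_bij sB (phiAB _ Ag')) (close _ Ag' A'g').
Qed.
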